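(* Let $K\subset L$ be a finite separable extension of commutative fields. Let $B$ be a $K$-subspace of $L$ containing $1$. Then the smallest integer $n\geq1$ such that $\langle B^n\rangle$ is a field satisfies $n\leq 2\dim_KL/\dim_KB$.
   Context: For $S\subset L$, $\langle S\rangle$ denotes the $K$-subspace of $L$ spanned by $S$. $B^m=\{b_1\cdots b_m\mid b_i\in B\}$ is the $m$-fold product set. *)

From HB Require Import structures.
From mathcomp Require Import all_boot all_order all_algebra all_field.
Set Implicit Arguments. Unset Strict Implicit. Unset Printing Implicit Defensive.
Import GRing.Theory Num.Theory.
Local Open Scope ring_scope.

Definition is_field_vs (K : fieldType) (L : fieldExtType K) (V : {vspace L}) : Prop :=
  [/\ (1 : L) \in V,
      (forall x y : L, x \in V -> y \in V -> x * y \in V) &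
      (forall x : L, x \in V -> x^-1 \in V)].

(* Bound on the first field power of a subspace (a linear analogue of Kneser's
   theorem, in the form of Hamidoune's isoperimetric method).

   Let F = <B^n> be the first power of B that is a field.  Call a nonzero
   subspace X of F a fragment when XB <> F, and let delta X = dim XB - dim X.
   The key estimate (fragment_growth) is dim B <= 2 delta X for every fragment:
   take k minimal among the delta of fragments and, among fragments with
   delta = k, an "atom" A of minimal dimension a.  Submodularity of
   X |-> dim XB, together with a duality X |-> X^perp inside F given by a
   nondegenerate pairing (x, y) |-> tau (x y), tau a linear form with
   tau 1 <> 0, shows that two atoms
   meeting nontrivially coincide (atoms_meet_eq).  Hence the atom through 1 is
   stable under multiplication by its elements, i.e. it is a subfield H; since
   B generates F, some b in B lies outside H, so H + Hb <= HB gives 2a <= a + k,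
   and dim B <= dim HB = a + k <= 2k.
   Applied to the fragments B^j, 1 <= j <= n-2, the estimate shows that each
   power grows by at least dim B / 2, whence n dim B <= 2 dim B^(n-1) <= 2 dim L. *)

From HB Require Import structures.
From mathcomp Require Import all_boot all_order all_algebra all_field zify.
From Stdlib Require Import Classical.
Import GRing.Theory Num.Theory.
Local Open Scope ring_scope.
Set Implicit Arguments. Unset Strict Implicit. Unset Printing Implicit Defensive.

Lemma classical_ex_minn (P : nat -> Prop) :
  (exists n, P n) -> exists2 n, P n & forall m, P m -> (n <= m)%N.
Proof.
move=> [n Pn]; apply: NNPP => no_min.
have noP k : forall m, (m <= k)%N -> ~ P m.
  elim: k => [|k IHk] m le_mk Pm; apply: no_min; exists m => // j Pj.
    by move: le_mk; rewrite leqn0 => /eqP ->.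
  rewrite leqNgt; apply/negP => lt_jm.
  by apply: (IHk j) => //; rewrite -ltnS (leq_trans lt_jm).
exact: (noP n n (leqnn n) Pn).
Qed.

Section Subfields.
Variables (K : fieldType) (L : fieldExtType K).
Implicit Types (U V : {vspace L}).

Lemma field_mul_closed V : is_field_vs V -> (V * V <= V)%VS.
Proof. by case=> _ VM _; apply/prodvP. Qed.

(* In a finite extension, a subspace containing 1 and closed under
   multiplication is a subalgebra, hence a subfield. *)
Lemma one_mul_closed_field V : (1 : L) \in V -> (V * V <= V)%VS -> is_field_vs V.
Proof.
move=> V1 VV; pose A := ASpace (introT andP (conj (has_algid1 V1) VV)).
by split=> [|x y|x]; rewrite ?(@memvV _ _ A) //; apply: (@memvM _ _ A).
Qed.

Lemma expv_sub_field U V n : is_field_vs V -> (U <= V)%VS -> (U ^+ n <= V)%VS.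
Proof.
case=> V1 VM _ sUV; elim: n => [|n IHn]; first by rewrite expv0 -memvE.
by rewrite expvSl; apply/prodvP => u v /(subvP sUV) uV /(subvP IHn); apply: VM.
Qed.

(* If b lies outside the subfield V, then V and Vb are independent; when U
   also contains 1, this doubles dim V inside VU. *)
Lemma field_coset_dim V U b : is_field_vs V ->
  (1 : L) \in U -> b \in U -> b \notin V -> (2 * \dim V <= \dim (V * U))%N.
Proof.
case=> _ VM VV U1 bU bV; have b0 : b != 0 by apply: contraNneq bV => ->; rewrite mem0v.
have disjoint : (V :&: V * <[b]> = 0)%VS.
  apply/eqP; rewrite -subv0; apply/subvP => z /memv_capP[zV /memv_cosetP[v vV zE]].
  rewrite memv0 zE; have [->|v0] := eqVneq v 0; first by rewrite mul0r.
  by case/negP: bV; rewrite -(mulKf v0 b) VM // ?VV // -zE.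
have dsum := dimv_sum_cap V (V * <[b]>).
rewrite disjoint dimv0 addn0 dim_cosetv // in dsum.
rewrite mul2n -addnn -dsum dimvS // subv_add -{1}[V]prodv1.
by rewrite !prodvSr // -memvE.
Qed.

Lemma dim_prodv_submod (X1 X2 U : {vspace L}) :
  (\dim ((X1 + X2) * U) + \dim ((X1 :&: X2) * U) <= \dim (X1 * U) + \dim (X2 * U))%N.
Proof.
rewrite prodvDl -[X in (_ <= X)%N]dimv_sum_cap leq_add2l dimvS //.
by rewrite subv_cap !prodvSl ?capvSl ?capvSr.
Qed.
End Subfields.

Section Powers.
Variables (K : fieldType) (L : fieldExtType K) (B : {vspace L}).
Hypothesis B1 : (1 : L) \in B.

Lemma expv_monotone i j : (i <= j)%N -> (B ^+ i <= B ^+ j)%VS.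
Proof.
move/subnK <-; elim: (j - i)%N => [|d IHd]; first by rewrite add0n.
rewrite addSn expvSr (subv_trans IHd) // -{1}[(B ^+ _)%VS]prodv1 prodvSr // -memvE.
Qed.

Lemma one_in_expv j : (1 : L) \in (B ^+ j)%VS.
Proof. by rewrite memvE (expv_monotone (leq0n j)). Qed.

(* The chain of powers is bounded by dim L, hence stationary. *)
Lemma expv_stabilizes : exists j, (B ^+ j.+1)%VS = (B ^+ j)%VS.
Proof.
have grow j : (forall i, (i < j)%N -> (B ^+ i.+1)%VS != (B ^+ i)%VS) ->
    (j <= \dim (B ^+ j))%N.
  elim: j => // j IHj neq; have := neq j (ltnSn j).
  rewrite eq_sym eqEdim expv_monotone ?leqnSn //= -ltnNge.
  by apply: leq_ltn_trans; apply: IHj => i lt_ij; apply: neq; rewrite ltnS ltnW.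
case: (pickP (fun i : 'I_(\dim {:L}).+1 => (B ^+ i.+1)%VS == (B ^+ i)%VS)).
  by move=> i /eqP; exists i.
move=> none; have := grow (\dim {:L}).+1 (fun i lt_i => negbT (none (Ordinal lt_i))).
by rewrite ltnNge dimvS ?subvf.
Qed.

Lemma expv_field_stable m : (0 < m)%N ->
  is_field_vs (B ^+ m)%VS <-> (B ^+ m.+1)%VS = (B ^+ m)%VS.
Proof.
move=> m_gt0; split=> [/field_mul_closed Bm_mul | stable].
  apply/eqP; rewrite eqEsubv (expv_monotone (leqnSn m)) andbT expvSr.
  by rewrite (subv_trans _ Bm_mul) // prodvSr // -{1}[B]expv1 expv_monotone.
apply: one_mul_closed_field; first exact: one_in_expv.
have stableD k : (B ^+ (m + k))%VS = (B ^+ m)%VS.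
  by elim: k => [|k IHk]; rewrite ?addn0 // addnS expvSr IHk -expvSr.
by rewrite -expvD stableD.
Qed.
End Powers.

Section Orthogonal.
Variables (K : fieldType) (L : fieldExtType K) (tau : {linear L -> K^o}).

(* Given a linear form tau, y |-> (tau (w_i y))_i records the pairing of y
   with a basis (w_i) of W; its kernel is the orthogonal of W. *)
Definition pairing_row (W : {vspace L}) (y : L) : 'rV[K^o]_(\dim W) :=
  \row_i tau ((vbasis W)`_i * y).

Fact pairing_row_is_linear W : linear (pairing_row W).
Proof.
by move=> a u v; apply/rowP=> i; rewrite !mxE mulrDr -scalerAr linearD linearZ.
Qed.

HB.instance Definition _ W :=
  GRing.isLinear.Build K L 'rV[K^o]_(\dim W) *:%R (pairing_row W) (pairing_row_is_linear W).

Definition orth (F W : {vspace L}) : {vspace L} := (F :&: lker (linfun (pairing_row W)))%VS.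

Lemma orthP (F W : {vspace L}) (y : L) :
  reflect (y \in F /\ forall w, w \in W -> tau (w * y) = 0) (y \in orth F W).
Proof.
rewrite /orth memv_cap memv_ker lfunE.
apply: (iffP andP) => [[yF /eqP row0] | [yF Wy0]]; split=> //.
  move=> w /coord_vbasis ->; rewrite mulr_suml linear_sum big1 // => i _.
  rewrite -scalerAl linearZ /=.
  by move/rowP/(_ i): row0; rewrite !mxE => ->; rewrite scaler0.
apply/eqP/rowP=> i; rewrite !mxE; apply: Wy0.
by apply: vbasis_mem; apply: mem_nth; rewrite size_tuple.
Qed.

(* Rank-nullity: orth F W has codimension at most dim W in F. *)
Lemma dim_orth_ge (F W : {vspace L}) : (\dim F <= \dim (orth F W) + \dim W)%N.
Proof.
rewrite -(limg_ker_dim (linfun (pairing_row W)) F) leq_add2l.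
by rewrite (leq_trans (dimvS (subvf _))) // dimvf /dim /= mul1n.
Qed.
End Orthogonal.

Section Fragments.
Variables (K : fieldType) (L : fieldExtType K) (tau : {linear L -> K^o}).
Variables (F B : {vspace L}).
Hypotheses (F_field : is_field_vs F) (tau1 : tau 1 != 0).
Hypotheses (B1 : (1 : L) \in B) (BF : (B <= F)%VS).
Hypothesis F_gen : forall H, is_field_vs H -> (B <= H)%VS -> (F <= H)%VS.
Implicit Types X Y W : {vspace L}.

Lemma sub_mulB X : (X <= X * B)%VS.
Proof. by rewrite -{1}[X]prodv1 prodvSr // -memvE. Qed.

Lemma mulB_subF X : (X <= F)%VS -> (X * B <= F)%VS.
Proof. by move=> XF; rewrite (subv_trans _ (field_mul_closed F_field)) ?prodvS. Qed.

(* The pairing is nondegenerate on the field F, since tau 1 <> 0. *)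
Lemma orthF : orth tau F F = 0%VS.
Proof.
case: F_field => _ _ FV.
apply/eqP; rewrite -subv0; apply/subvP=> y /orthP[yF Fy0]; rewrite memv0.
have [// | y0] := eqVneq y 0.
by move: tau1; rewrite -(mulVf y0) Fy0 ?FV ?eqxx.
Qed.

Lemma dim_orth W : (W <= F)%VS -> (\dim (orth tau F W) + \dim W)%N = \dim F.
Proof.
move=> WF; apply/eqP; rewrite eqn_leq dim_orth_ge andbT.
have [W' [dimW' sumW']] : exists W', (\dim W + \dim W')%N = \dim F /\ (W + W' = F)%VS.
  exists (F :\: W)%VS; split; first by rewrite -(dimv_cap_compl F W) (capv_idPr WF).
  by rewrite addvC -{2}(addv_diff_cap F W) (capv_idPr WF).
have orth_disjoint : (orth tau F W :&: orth tau F W' = 0)%VS.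
  apply/eqP; rewrite -subv0 -orthF; apply/subvP=> y /memv_capP[/orthP[yF Wy0] /orthP[_ W'y0]].
  apply/orthP; split=> // w; rewrite -sumW'.
  by case/memv_addP=> [u Wu [v W'v ->]]; rewrite mulrDl linearD Wy0 ?W'y0 ?addr0.
have := dimv_sum_cap (orth tau F W) (orth tau F W').
rewrite orth_disjoint dimv0 addn0.
have : (\dim (orth tau F W + orth tau F W') <= \dim F)%N.
  by apply: dimvS; rewrite subv_add !capvSl.
have := dim_orth_ge tau F W'.
lia.
Qed.

Definition fragment X := [&& X != 0%VS, (X <= F)%VS & (X * B)%VS != F].
Definition delta X := (\dim (X * B) - \dim X)%N.

Lemma deltaE X : \dim (X * B) = (delta X + \dim X)%N.
Proof. by rewrite subnK // dimvS // sub_mulB. Qed.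

Lemma fragment_mulB_lt X : fragment X -> (\dim (X * B) < \dim F)%N.
Proof.
case/and3P=> _ XF XBF; rewrite ltn_neqAle dimvS ?mulB_subF // andbT.
by apply: contra XBF => /eqP dimXB; rewrite eqEdim mulB_subF //= dimXB.
Qed.

(* The dual fragment orth F (XB): its boundary is no larger than that of X,
   since (orth F (XB)) B lies in orth F X. *)
Lemma fragment_dual X : fragment X -> exists2 Y,
  fragment Y & (delta Y <= delta X)%N /\ (\dim Y + \dim (X * B))%N = \dim F.
Proof.
move=> fX; have XBlt := fragment_mulB_lt fX; case/and3P: fX => X0 XF _.
pose Y := orth tau F (X * B).
have dimY : (\dim Y + \dim (X * B))%N = \dim F by apply: dim_orth; rewrite mulB_subF.
have dimX : (\dim (orth tau F X) + \dim X)%N = \dim F := dim_orth XF.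
have YB_orth : (Y * B <= orth tau F X)%VS.
  apply/prodvP=> y b /orthP[yF XBy0] bB; apply/orthP; split.
    by case: F_field => _ FM _; rewrite FM // (subvP BF).
  by move=> x xX; rewrite mulrA mulrAC XBy0 // memv_mul.
have leYB : (\dim (Y * B) <= \dim (orth tau F X))%N := dimvS YB_orth.
have leY : (\dim Y <= \dim (Y * B))%N := dimvS (sub_mulB Y).
have leX : (\dim X <= \dim (X * B))%N := dimvS (sub_mulB X).
have X_gt0 : (0 < \dim X)%N by rewrite lt0n dimv_eq0.
rewrite /delta; exists Y; last by split=> //; clearbody Y; lia.
apply/and3P; split.
- by rewrite -dimv_eq0 -lt0n; lia.
- exact: capvSl.
- apply/eqP=> YBF; have : (\dim F <= \dim (orth tau F X))%N by rewrite -{1}YBF.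
  lia.
Qed.

Lemma fragment_coset X x : fragment X -> x \in F -> x != 0 ->
  [/\ fragment (X * <[x]>), delta (X * <[x]>) = delta X & \dim (X * <[x]>) = \dim X].
Proof.
case/and3P=> X0 XF XBF xF x0; case: F_field => _ FM _.
have XxB : (X * <[x]> * B = X * B * <[x]>)%VS by rewrite -!prodvA [(<[x]> * B)%VS]prodvC.
have dimXx : \dim (X * <[x]>) = \dim X := dim_cosetv X x0.
have dimXBx : \dim (X * B * <[x]>) = \dim (X * B) := dim_cosetv (X * B) x0.
split; last 2 first.
- by rewrite /delta XxB dimXx dimXBx.
- exact: dimXx.
apply/and3P; split; first by rewrite -dimv_eq0 dimXx dimv_eq0.
  by apply/prodvP=> u v /(subvP XF) uF /vlineP[k ->]; rewrite -scalerAr memvZ // FM.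
rewrite XxB; apply: contra XBF => /eqP XBxF.
by rewrite eqEdim mulB_subF //= -dimXBx XBxF.
Qed.

(* k is the connectivity (least delta of a fragment) and a the least dimension
   of a fragment achieving it; atoms are the fragments achieving both. *)
Section Atoms.
Variables (k a : nat) (A0 : {vspace L}).
Hypothesis kappa_min : forall Y, fragment Y -> (k <= delta Y)%N.
Hypothesis atom_min : forall Y, fragment Y -> delta Y = k -> (a <= \dim Y)%N.

Definition atom X := [/\ fragment X, delta X = k & \dim X = a].
Hypothesis atomA0 : atom A0.

(* Two atoms meeting nontrivially are equal: otherwise A1 :&: A2 would be a
   fragment with larger delta, and submodularity would contradict the
   minimality of k applied to A1 + A2 (or to the dual of A1 if A1 + A2 spans). *)
Lemma atoms_meet_eq A1 A2 : atom A1 -> atom A2 -> (A1 :&: A2)%VS != 0%VS -> A1 = A2.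
Proof.
move=> [f1 d1 a1] [f2 d2 a2] I0; apply/eqP; apply: contraT => A12.
have [A1_0 A1F A1BF] := and3P f1; have [_ A2F _] := and3P f2.
set I := (A1 :&: A2)%VS in I0 *.
have dimI_lt : (\dim I < a)%N.
  rewrite ltn_neqAle -a1 dimvS ?capvSl // andbT; apply: contra A12 => /eqP dimI.
  have IA1 : I = A1 by apply/eqP; rewrite eqEdim capvSl dimI leqnn.
  by rewrite eqEdim -IA1 capvSr /= dimI a1 a2.
have fI : fragment I.
  rewrite /fragment I0 (subv_trans (capvSl _ _) A1F) /=; apply: contra A1BF => /eqP IBF.
  by rewrite eqEdim mulB_subF //= -{1}IBF dimvS // prodvSl // capvSl.
have deltaI : (k < delta I)%N.
  rewrite ltn_neqAle kappa_min // andbT; apply/eqP=> deltaIk.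
  by have := atom_min fI (esym deltaIk); rewrite leqNgt dimI_lt.
have submod : (\dim ((A1 + A2) * B) + \dim (I * B) <= \dim (A1 * B) + \dim (A2 * B))%N.
  exact: dim_prodv_submod.
have dim_sum : (\dim (A1 + A2) + \dim I)%N = (\dim A1 + \dim A2)%N := dimv_sum_cap A1 A2.
have dimA1B : \dim (A1 * B) = (k + a)%N by rewrite deltaE d1 a1.
have dimA2B : \dim (A2 * B) = (k + a)%N by rewrite deltaE d2 a2.
have dimIB : (k + \dim I < \dim (I * B))%N by rewrite deltaE ltn_add2r.
have [SBF | SBnF] := eqVneq ((A1 + A2) * B)%VS F.
  have [Y fY [deltaY dimY]] := fragment_dual f1.
  have deltaYk : delta Y = k by apply/eqP; rewrite eqn_leq kappa_min // andbT -d1.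
  have aY := atom_min fY deltaYk.
  have submodF : (\dim F + \dim (I * B) <= \dim (A1 * B) + \dim (A2 * B))%N.
    by rewrite -{1}SBF.
  by clear -aY dimY dimA1B dimA2B dimIB submodF; lia.
have fS : fragment (A1 + A2).
  rewrite /fragment SBnF subv_add A1F A2F /= andbT.
  by apply: contra A1_0; rewrite -!subv0; apply: subv_trans (addvSl _ _).
have kS := kappa_min fS; have dimSB := deltaE (A1 + A2).
by clear -kS dimSB submod dim_sum dimA1B dimA2B dimIB a1 a2; lia.
Qed.

Lemma atom_coset X x : atom X -> x \in F -> x != 0 -> atom (X * <[x]>).
Proof.
case=> fX dX aX xF x0; have [fXx dXx aXx] := fragment_coset fX xF x0.
by split; rewrite ?dXx ?aXx.
Qed.

(* An atom through 1 is a subfield: H z = H for every nonzero z in H. *)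
Lemma atom_one_field H : atom H -> (1 : L) \in H -> is_field_vs H.
Proof.
move=> atomH H1; apply: one_mul_closed_field => //; apply/prodvP=> y z yH zH.
have [-> | z0] := eqVneq z 0; first by rewrite mulr0 mem0v.
have [fH _ _] := atomH; have [_ HF _] := and3P fH.
have Hz_eq : (H * <[z]>)%VS = H.
  apply: atoms_meet_eq (atom_coset atomH (subvP HF z zH) z0) atomH _.
  apply/eqP=> Hz_H0; suff : z \in 0%VS by rewrite memv0 (negPf z0).
  by rewrite -Hz_H0 memv_cap zH andbT; apply/memv_cosetP; exists 1; rewrite ?mul1r.
by rewrite -Hz_eq memv_mul ?memv_line.
Qed.

Lemma atom_through_one : exists2 H, atom H & (1 : L) \in H.
Proof.
have [fA0 _ _] := atomA0; have [A0_0 A0F _] := and3P fA0.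
have x0 : vpick A0 != 0 by rewrite vpick0.
have xF : vpick A0 \in F := subvP A0F _ (memv_pick A0).
case: F_field => _ _ FV.
exists (A0 * <[(vpick A0)^-1]>)%VS; first by apply: atom_coset; rewrite ?FV ?invr_eq0.
by rewrite -(divff x0) memv_mul ?memv_pick ?memv_line.
Qed.

(* The atom H through 1 is a proper subfield, so B is not inside it. *)
Lemma connectivity_bound : (\dim B <= 2 * k)%N.
Proof.
have [H atomH H1] := atom_through_one; have H_field := atom_one_field atomH H1.
have [fH deltaH dimH] := atomH; have [_ HF HBF] := and3P fH.
have [b bB bH] : exists2 b, b \in B & b \notin H.
  apply/subvPn; apply: contra HBF => BH.
  by rewrite eqEsubv mulB_subF //= (subv_trans (F_gen H_field BH)) ?sub_mulB.
have dimHB : (2 * \dim H <= \dim (H * B))%N := field_coset_dim H_field B1 bB bH.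
have leB : (\dim B <= \dim (H * B))%N by rewrite dimvS // -{1}[B]prod1v prodvSl // -memvE.
have := deltaE H; rewrite deltaH dimH.
by clear -dimHB leB dimH; lia.
Qed.
End Atoms.

Theorem fragment_growth X : fragment X -> (\dim B <= 2 * delta X)%N.
Proof.
move=> fX.
pose has_delta k := exists2 Y, fragment Y & delta Y = k.
have [k [X1 fX1 dX1] k_min] : exists2 k, has_delta k & forall m, has_delta m -> (k <= m)%N.
  by apply: classical_ex_minn; exists (delta X), X.
pose has_atom_dim a := exists2 Y, fragment Y & delta Y = k /\ \dim Y = a.
have [a [A fA [dA aA]] a_min] :
    exists2 a, has_atom_dim a & forall m, has_atom_dim m -> (a <= m)%N.
  by apply: classical_ex_minn; exists (\dim X1), X1.
have kappa_min Y : fragment Y -> (k <= delta Y)%N by move=> fY; apply: k_min; exists Y.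
have atom_min Y : fragment Y -> delta Y = k -> (a <= \dim Y)%N.
  by move=> fY dY; apply: a_min; exists Y.
apply: leq_trans (connectivity_bound kappa_min atom_min (And3 fA dA aA)) _.
by rewrite leq_mul2l kappa_min ?orbT.
Qed.
End Fragments.

Section MinimalFieldPower.
Variables (K : fieldType) (L : fieldExtType K) (B : {vspace L}) (n : nat).
Hypotheses (B1 : (1 : L) \in B) (n_gt0 : (0 < n)%N) (Bn_field : is_field_vs (B ^+ n)%VS).
Hypothesis below_n : forall m, (1 <= m)%N -> (m < n)%N -> ~ is_field_vs (B ^+ m)%VS.

(* A linear form not vanishing at 1, defining the pairing. *)
Let coord1 : coord [tuple (1 : L)] 0 1 != 0.
Proof.
have := @coord_free _ _ 1 [tuple (1 : L)] 0 0; rewrite /= seq1_free oner_neq0.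
by move=> /(_ isT) ->; rewrite oner_eq0.
Qed.

Let B_sub : (B <= B ^+ n)%VS.
Proof. by rewrite -{1}[B]expv1 expv_monotone. Qed.

Let Bn_gen H : is_field_vs H -> (B <= H)%VS -> (B ^+ n <= H)%VS.
Proof. exact: expv_sub_field. Qed.

Lemma expv_fragment j : (0 < j)%N -> (j.+1 < n)%N -> fragment (B ^+ n) B (B ^+ j).
Proof.
move=> j_gt0 lt_jn; apply/and3P; split.
- by apply: contraTneq (one_in_expv B1 j) => ->; rewrite memv0 oner_eq0.
- by rewrite expv_monotone // ltnW // ltnW.
- rewrite -expvSr; apply/eqP=> Bj_eq; apply: (below_n (m := j.+1)) => //.
  by rewrite Bj_eq.
Qed.

Lemma expv_dim_growth j : (0 < j)%N -> (j < n)%N -> (j.+1 * \dim B <= 2 * \dim (B ^+ j))%N.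
Proof.
elim: j => // j IHj _ lt_jn; have [-> | j_gt0] := posnP j; first by rewrite mulnC.
have growth := fragment_growth Bn_field coord1 B1 B_sub Bn_gen (expv_fragment j_gt0 lt_jn).
have IH := IHj j_gt0 (ltnW lt_jn).
have dimBj1 : \dim (B ^+ j.+1) = (delta B (B ^+ j) + \dim (B ^+ j))%N.
  by rewrite expvSr deltaE.
by rewrite mulSn; clear -growth IH dimBj1; lia.
Qed.

Lemma minimal_field_power_bound : (n * \dim B <= 2 * \dim {:L})%N.
Proof.
have dimBL : (\dim B <= \dim {:L})%N by rewrite dimvS ?subvf.
have [n_le1 | n_gt1] := leqP n 1.
  have -> : n = 1%N by apply/anti_leq; rewrite n_le1.
  by rewrite mul1n (leq_trans dimBL) ?leq_pmull.
have pred_gt0 : (0 < n.-1)%N by rewrite -ltnS prednK.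
have := expv_dim_growth pred_gt0; rewrite prednK // => /(_ (leqnn n)).
have : (\dim (B ^+ n.-1) <= \dim {:L})%N by rewrite dimvS ?subvf.
by lia.
Qed.
End MinimalFieldPower.

Unset Implicit Arguments.
Theorem mainTheorem15 (K : fieldType) (L : fieldExtType K)
  (B : {vspace L})
  (hsep : separable 1%VS {:L}%VS)
  (h1 : (1 : L) \in B) :
  exists n : nat,
    [/\ (1 <= n)%N,
        is_field_vs (B ^+ n)%VS,
        (forall m : nat, (1 <= m)%N -> (m < n)%N -> ~ is_field_vs (B ^+ m)%VS) &
        (n%:R : rat) <= 2 * (\dim {:L})%:R / (\dim B)%:R].
Proof.
pose stable m := (0 < m)%N && ((B ^+ m.+1)%VS == (B ^+ m)%VS).
have stable_ex : exists m, stable m.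
  have [j Bj] := expv_stabilizes h1; exists j.+1; apply/andP; split=> //; apply/eqP.
  by rewrite expvSr Bj -expvSr.
have [n /andP[n_gt0 /eqP Bn_eq] n_min] := ex_minnP stable_ex.
have below_n m : (1 <= m)%N -> (m < n)%N -> ~ is_field_vs (B ^+ m)%VS.
  move=> m_gt0 lt_mn /(expv_field_stable h1 m_gt0) /eqP Bm_eq.
  by have := n_min m; rewrite /stable m_gt0 Bm_eq leqNgt lt_mn => /(_ isT).
have Bn_field : is_field_vs (B ^+ n)%VS by apply/(expv_field_stable h1 n_gt0).
exists n; split=> //.
have dimB_gt0 : (0 < \dim B)%N.
  by rewrite lt0n dimv_eq0; apply: contraTneq h1 => ->; rewrite memv0 oner_eq0.
rewrite ler_pdivlMr ?ltr0n // -natrM -natrM ler_nat.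
exact: minimal_field_power_bound.
Qed.
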